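(* For every oriented forest $F$, $\mathrm{mad}_{\vec{\chi}}(F)=|V(F)|$.
   Context: An oriented forest is an orientation of an undirected forest. $\vec{\chi}(D)$ is the dichromatic number (least $k$ such that $V(D)$ partitions into $k$ sets inducing acyclic subdigraphs). A subdivision of $F$ is obtained by replacing each arc $(x,y)$ by a directed $(x,y)$-path, internally disjoint with new internal vertices. $\mathrm{mad}_{\vec{\chi}}(F)$ is the least integer $c$ such that every digraph $D$ with $\vec{\chi}(D)\ge c$ contains a subdivision of $F$ as a subdigraph. *)

From mathcomp Require Import all_boot.
Set Implicit Arguments. Unset Strict Implicit. Unset Printing Implicit Defensive.

(* A (finite, loopless) digraph is an irreflexive relation D on a finType T
   (digons x->y, y->x are allowed). *)
Definition loopless (T : finType) (D : rel T) : Prop := irreflexive D.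

Definition acyclic_in (T : finType) (D : rel T) (S : {set T}) : Prop :=
  ~ (exists s : seq T, s != [::] /\ all (fun x => x \in S) s /\ cycle D s).

Definition dicolorable (T : finType) (D : rel T) (k : nat) : Prop :=
  exists f : T -> 'I_k, forall i : 'I_k, acyclic_in D [set x | f x == i].

Definition dichromatic (T : finType) (D : rel T) (k : nat) : Prop :=
  dicolorable D k /\ forall j, dicolorable D j -> k <= j.

Definition dichromatic_ge (T : finType) (D : rel T) (c : nat) : Prop :=
  forall k, dichromatic D k -> c <= k.

(* Oriented forest: orientation of an undirected forest: no loops, no digons,
   and the underlying undirected graph has no cycle (of length >= 3). *)
Definition symc (V : finType) (F : rel V) : rel V := fun u v => F u v || F v u.

Definition oriented_forest (V : finType) (F : rel V) : Prop :=
  irreflexive F /\ (forall u v, F u v -> ~~ F v u) /\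
  ~ (exists s : seq V, 2 < size s /\ uniq s /\ cycle (symc F) s).

(* D contains a subdivision of F as a subdigraph: branch vertices phi v
   (injective), and for every arc (u,v) of F a directed path from phi u to
   phi v whose internal vertices P u v are new (not branch vertices), distinct,
   and disjoint from the internal vertices of the paths of the other arcs. *)
Definition contains_subdivision (V : finType) (F : rel V)
    (T : finType) (D : rel T) : Prop :=
  exists (phi : V -> T) (P : V -> V -> seq T),
    injective phi /\
    (forall u v, F u v ->
       [/\ path D (phi u) (rcons (P u v) (phi v)), uniq (P u v) &
           forall x, x \in P u v -> forall w, x != phi w]) /\
    (forall u v u' v', F u v -> F u' v' -> (u, v) <> (u', v') ->
       forall x, x \in P u v -> x \notin P u' v').

Definition mad_property (V : finType) (F : rel V) (c : nat) : Prop :=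
  forall (T : finType) (D : rel T), loopless D -> dichromatic_ge D c ->
    contains_subdivision F D.

Definition is_mad_dichi (V : finType) (F : rel V) (c : nat) : Prop :=
  mad_property F c /\ forall c', mad_property F c' -> c <= c'.

From mathcomp Require Import all_boot zify.
From Stdlib Require Import Classical.
Set Implicit Arguments. Unset Strict Implicit. Unset Printing Implicit Defensive.

(* If D has dichromatic number at least k = |V(F)|, it has a vertex set S
   inducing a k-dicritical subdigraph; there every vertex has out-degree (and,
   by reversing arcs, in-degree) at least k - 1, since otherwise it could be
   recoloured with a colour missing from its out-neighbours.  An oriented
   forest on k vertices then embeds greedily into D[S]: embed F minus a leaf,
   and send the leaf to an unused in- or out-neighbour of the image of its
   neighbour, which exists because only k - 2 other vertices are used.  So D
   contains F itself, a trivial subdivision.  Conversely, the complete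
   symmetric digraph on k - 1 vertices has dichromatic number k - 1 and has too
   few vertices for the branch vertices of any subdivision of F. *)

Local Notation converse R := (fun x y => R y x).

Lemma missing_colour (s : seq nat) k : size s < k -> exists2 i, i < k & i \notin s.
Proof.
move=> small; have /allPn[i] : ~~ all (fun i => i \in s) (iota 0 k).
  apply: contraTN small => /allP sub; rewrite -leqNgt -{1}(size_iota 0 k).
  exact: uniq_leq_size (iota_uniq 0 k) sub.
by rewrite mem_iota; exists i.
Qed.

Section Dicolouring.

Variables (T : finType) (D : rel T).

Lemma acyclic_in_sub (A B : {set T}) :
  B \subset A -> acyclic_in D A -> acyclic_in D B.
Proof.
move=> /subsetP BA acA [s [s0 [sB cyc]]]; apply: acA; exists s; split=> //.
by split=> //; apply/allP => x /(allP sB) /BA.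
Qed.

Lemma acyclic_in_converse (A : {set T}) :
  acyclic_in D A -> acyclic_in (converse D) A.
Proof.
move=> acA [s [s0 [sA cyc]]]; apply: acA; exists (rev s).
by rewrite -size_eq0 size_rev size_eq0 all_rev rev_cycle.
Qed.

(* Colours are naturals bounded only on S, so that S = set0 is 0-dicolourable
   even when T is inhabited. *)
Definition dicolorable_on (S : {set T}) (k : nat) : Prop :=
  exists2 f : T -> nat, {in S, forall x, f x < k} &
    forall i, acyclic_in D [set x in S | f x == i].

(* [dicritical S k] says that D[S] is (k+1)-dicritical. *)
Definition dicritical (S : {set T}) (k : nat) : Prop :=
  ~ dicolorable_on S k /\ forall x, x \in S -> dicolorable_on (S :\ x) k.

Lemma dicolorable_on_set0 k : dicolorable_on set0 k.
Proof.
exists (fun _ => 0) => [x|i [s [s0 [sA _]]]]; first by rewrite inE.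
by case: s s0 sA => //= x s _; rewrite !inE => /andP[/andP[]].
Qed.

Lemma dicolorable_on_setT k : dicolorable_on setT k -> dicolorable D k.
Proof.
move=> [f fk acf]; exists (fun x => Ordinal (fk x (in_setT x))) => i.
apply: acyclic_in_sub (acf i); apply/subsetP => x.
by rewrite !inE => /eqP <-; rewrite /= eqxx.
Qed.

Lemma dicolorable_dichromatic k :
  dicolorable D k -> exists2 k', k' <= k & dichromatic D k'.
Proof.
elim/ltn_ind: k => k IH Dk.
have [[j jk Dj]|none] := classic (exists2 j, j < k & dicolorable D j).
  have [k' k'j chi] := IH j jk Dj.
  by exists k' => //; apply: leq_trans k'j (ltnW jk).
exists k => //; split=> // j Dj; rewrite leqNgt; apply/negP => jk.
by apply: none; exists j.
Qed.

Lemma dichromatic_ge_not_dicolorable c :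
  dichromatic_ge D c.+1 -> ~ dicolorable_on setT c.
Proof.
move=> chiD /dicolorable_on_setT /dicolorable_dichromatic [k kc /chiD].
by rewrite ltnNge kc.
Qed.

Lemma exists_dicritical (S : {set T}) k :
  ~ dicolorable_on S k -> exists S', dicritical S' k.
Proof.
have [n] := ubnP #|S|; elim: n S => // n IH S /ltnSE cardS notcol.
have [crit|] := classic (forall x, x \in S -> dicolorable_on (S :\ x) k).
  by exists S; split.
move=> /not_all_ex_not[x /(imply_to_and (x \in S))[xS notcolx]].
by apply: (IH (S :\ x)) notcolx; rewrite (cardsD1 x S) xS in cardS.
Qed.

(* A monochromatic cycle through x would leave x along an arc to an
   out-neighbour of colour i. *)
Lemma dicolorable_on_recolour (S : {set T}) k x (f : T -> nat) i :
  irreflexive D -> {in S :\ x, forall y, f y < k} ->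
  (forall j, acyclic_in D [set y in S :\ x | f y == j]) -> i < k ->
  (forall y, y \in S -> D x y -> f y != i) -> dicolorable_on S k.
Proof.
move=> irrD fk acf ik xi.
exists (fun y => if y == x then i else f y) => [y yS|j [s [s0 [sj cyc]]]].
  by case: eqP => [//|/eqP yx]; apply: fk; rewrite !inE yx.
have [xs|xNs] := boolP (x \in s).
  have Dxy := next_cycle cyc xs; set y := next s x in Dxy.
  have yx : y != x by apply: contraTneq Dxy => ->; rewrite irrD.
  have := allP sj y; rewrite mem_next !inE (negbTE yx) => /(_ xs) /andP[yS fyj].
  have := allP sj x xs; rewrite !inE eqxx => /andP[_ ij].
  by have := xi y yS Dxy; rewrite (eqP fyj) -(eqP ij) eqxx.
apply: (acf j); exists s; split=> //; split=> //; apply/allP => y ys.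
have yx : y != x by apply: contraNneq xNs => <-.
by have := allP sj y ys; rewrite !inE (negbTE yx).
Qed.

Lemma dicritical_outdegree (S : {set T}) k :
  irreflexive D -> dicritical S k ->
  forall x, x \in S -> k <= #|[set y in S | D x y]|.
Proof.
move=> irrD [notcol crit] x xS; rewrite leqNgt; apply/negP => small.
have [f fk acf] := crit x xS.
set s := map f (enum [set y in S | D x y]).
have [|i ik iNs] := @missing_colour s k; first by rewrite size_map -cardE.
apply: notcol; apply: (dicolorable_on_recolour irrD fk acf ik) => y yS Dxy.
by apply: contraNneq iNs => <-; apply: map_f; rewrite mem_enum !inE yS.
Qed.

End Dicolouring.

Lemma dicolorable_on_converse (T : finType) (D : rel T) S k :
  dicolorable_on D S k -> dicolorable_on (converse D) S k.
Proof. by move=> [f fk acf]; exists f => // i; apply: acyclic_in_converse. Qed.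

Lemma dicritical_converse (T : finType) (D : rel T) S k :
  dicritical D S k -> dicritical (converse D) S k.
Proof.
move=> [notcol crit]; split=> [/dicolorable_on_converse //|x xS].
exact/dicolorable_on_converse/crit.
Qed.

Section OrientedForest.

Variables (V : finType) (F : rel V).
Hypothesis forestF : oriented_forest F.

Local Notation E := (symc F).

Lemma symc_sym : symmetric E.
Proof. by move=> x y; rewrite /symc orbC. Qed.

Lemma symc_irr : irreflexive E.
Proof. by case: forestF => irrF _ x; rewrite /symc irrF. Qed.

Definition upath_in (U : {set V}) (x : V) (p : seq V) : bool :=
  [&& uniq (x :: p), all (fun y => y \in U) (x :: p) & path E x p].

Lemma forest_chord x p c :
  uniq (x :: p) -> path E x p -> c \in p -> E x c -> c = head x p.
Proof.
move=> uxp pxp cp xc; set j := index c p.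
have [j0|j_gt0] := posnP j; first by rewrite -(nth_index x cp) -/j j0 nth0.
have jp : j < size p by rewrite index_mem.
have q_def : take j.+1 p = rcons (take j p) c by rewrite (take_nth x) // nth_index.
case: forestF => _ [_ []]; exists (x :: take j.+1 p); split.
  by rewrite /= size_takel.
split; first exact: (take_uniq j.+2 uxp).
by rewrite /cycle rcons_path take_path //= q_def last_rcons symc_sym.
Qed.

Lemma exists_maximal_upath (U : {set V}) x p :
  upath_in U x p -> exists x' p', upath_in U x' p' /\
    forall c, c \in U -> E x' c -> c \in x' :: p'.
Proof.
have [n] := ubnP (#|U| - size p); elim: n x p => // n IH x p /ltnSE bound xp.
case: (pickP (fun c => [&& c \in U, E x c & c \notin x :: p])) => [c|maxl].
  move=> /and3P[cU xc cNxp]; case/and3P: xp => uxp xpU pxp.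
  have cxp : upath_in U c (x :: p).
    apply/and3P; split; first by rewrite cons_uniq cNxp.
      by rewrite [all _ _]/= cU.
    by rewrite [path _ _ _]/= pxp symc_sym xc.
  apply: (IH c (x :: p)) cxp; rewrite /= subnS prednK ?subn_gt0 //.
  rewrite -/(size (x :: p)) cardE (uniq_leq_size uxp) // => y /(allP xpU).
  by rewrite mem_enum.
exists x, p; split=> // c cU xc.
by have := maxl c; rewrite /= cU xc => /negbFE.
Qed.

Lemma forest_leaf (U : {set V}) :
  U != set0 -> exists2 w, w \in U & {in U &, forall a b, E w a -> E w b -> a = b}.
Proof.
case/set0Pn => u uU.
have [|x [p [/and3P[uxp /allP xpU pxp] maxl]]] := @exists_maximal_upath U u [::].
  by rewrite /upath_in /= uU.
have nbr_head c : c \in U -> E x c -> c = head x p.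
  move=> cU xc; apply: (forest_chord uxp pxp _ xc).
  have := maxl c cU xc; rewrite inE => /predU1P[cx|//].
  by rewrite cx symc_irr in xc.
exists x; first by apply: xpU; rewrite inE eqxx.
by move=> a b aU bU xa xb; rewrite (nbr_head a aU xa) (nbr_head b bU xb).
Qed.

End OrientedForest.

Lemma exists_outneighbour_notin (T : finType) (R : rel T) (S Im : {set T}) n z :
  irreflexive R -> (forall x, x \in S -> n <= #|[set y in S | R x y]|) ->
  #|Im| <= n -> z \in Im -> z \in S ->
  exists2 y, y \in [set y in S | R z y] & y \notin Im.
Proof.
move=> irrR deg small zIm zS; apply/subsetPn; apply: contraTN small => sub.
have sub' : [set y in S | R z y] \subset Im :\ z.
  apply/subsetP => y yN; rewrite !inE (subsetP sub y yN) andbT.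
  by apply: contraTneq yN => ->; rewrite inE irrR andbF.
have := leq_trans (deg z zS) (subset_leq_card sub').
by rewrite (cardsD1 z Im) zIm -ltnNge.
Qed.

Section GreedyEmbedding.

Variables (V T : finType) (F : rel V) (D : rel T) (S : {set T}).
Hypotheses (forestF : oriented_forest F) (irrD : irreflexive D).
Hypothesis cardS : #|V| <= #|S|.
Hypothesis outdegS : forall x, x \in S -> #|V|.-1 <= #|[set y in S | D x y]|.
Hypothesis indegS : forall x, x \in S -> #|V|.-1 <= #|[set y in S | D y x]|.

Definition embedding_on (U : {set V}) (phi : V -> T) : Prop :=
  [/\ {in U &, injective phi}, {in U, forall u, phi u \in S} &
      {in U &, forall u v, F u v -> D (phi u) (phi v)}].

Lemma exists_leaf_image (U : {set V}) w phi :
  w \in U -> {in U &, forall a b, symc F w a -> symc F w b -> a = b} ->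
  embedding_on (U :\ w) phi ->
  exists y, [/\ y \in S, y \notin phi @: (U :\ w) &
    {in U :\ w, forall v, (F w v -> D y (phi v)) /\ (F v w -> D (phi v) y)}].
Proof.
move=> wU leaf [_ phiS _]; set Im := phi @: (U :\ w).
have [irrF [asymF _]] := forestF.
have smallIm : #|Im| <= #|V|.-1.
  apply: leq_trans (leq_imset_card _ _) _.
  by have := max_card U; rewrite (cardsD1 w U) wU; lia.
case: (pickP (fun a => (a \in U) && symc F w a)) => [a /andP[aU wa]|isolated].
  have aUw : a \in U :\ w.
    by rewrite !inE aU andbT; apply: contraTneq wa => ->; rewrite symc_irr.
  have aIm : phi a \in Im by apply: imset_f.
  have [y [yS yIm ya]] : exists y, [/\ y \in S, y \notin Im &
      (F w a -> D y (phi a)) /\ (F a w -> D (phi a) y)].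
    case/orP: wa => [Fwa|Faw].
      have [y] := exists_outneighbour_notin (R := converse D) irrD indegS
        smallIm aIm (phiS a aUw).
      rewrite inE => /andP[yS Dya] yIm; exists y; split=> //; split=> // Faw.
      by have := asymF _ _ Fwa; rewrite Faw.
    have [y] := exists_outneighbour_notin irrD outdegS smallIm aIm (phiS a aUw).
    rewrite inE => /andP[yS Day] yIm; exists y; split=> //; split=> // Fwa.
    by have := asymF _ _ Fwa; rewrite Faw.
  exists y; split=> // v /setD1P[_ vU].
  have va : symc F w v -> v = a by move=> wv; apply: leaf.
  split=> arc; have /va av : symc F w v by rewrite /symc arc ?orbT.
    by rewrite av; apply: ya.1; rewrite -av.
  by rewrite av; apply: ya.2; rewrite -av.
have [y yS yIm] : exists2 y, y \in S & y \notin Im.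
  apply/subsetPn; apply: contraTN cardS => /subset_leq_card SIm.
  have : 0 < #|V| by apply/card_gt0P; exists w.
  by rewrite -ltnNge; lia.
exists y; split=> // v /setD1P[_ vU].
by split=> arc; have := isolated v; rewrite vU /symc arc ?orbT.
Qed.

Lemma embedding_on_extend (U : {set V}) w phi :
  w \in U -> {in U &, forall a b, symc F w a -> symc F w b -> a = b} ->
  embedding_on (U :\ w) phi -> exists psi, embedding_on U psi.
Proof.
move=> wU leaf emb; have [y [yS yIm yarcs]] := exists_leaf_image wU leaf emb.
have [phi_inj phiS phiD] := emb; have [irrF _] := forestF.
have inUw v : v \in U -> v != w -> v \in U :\ w by move=> vU vw; rewrite !inE vw.
have phiIm v : v \in U -> v != w -> phi v != y.
  by move=> vU vw; apply: contraNneq yIm => <-; apply/imset_f/inUw.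
exists (fun v => if v == w then y else phi v); split.
- move=> u v uU vU /=.
  case: (eqVneq u w) => [->|uw]; case: (eqVneq v w) => [->|vw] //.
  + by move=> yv; have := phiIm v vU vw; rewrite yv eqxx.
  + by move=> uy; have := phiIm u uU uw; rewrite uy eqxx.
  + by apply: phi_inj; apply: inUw.
- by move=> u uU /=; case: (eqVneq u w) => // uw; apply/phiS/inUw.
- move=> u v uU vU /=.
  case: (eqVneq u w) => [->|uw]; case: (eqVneq v w) => [->|vw].
  + by rewrite irrF.
  + by apply: (yarcs v (inUw v vU vw)).1.
  + by apply: (yarcs u (inUw u uU uw)).2.
  + by apply: phiD; apply: inUw.
Qed.

Lemma exists_embedding (t0 : T) (U : {set V}) : exists phi, embedding_on U phi.
Proof.
have [n] := ubnP #|U|; elim: n U => // n IH U /ltnSE cardU.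
have [->|U0] := eqVneq U set0.
  by exists (fun _ => t0); split=> u; rewrite inE.
have [w wU leaf] := forest_leaf forestF U0.
have [|phi emb] := IH (U :\ w); first by rewrite (cardsD1 w U) wU in cardU.
exact: embedding_on_extend wU leaf emb.
Qed.

End GreedyEmbedding.

Lemma contains_subdivision_of_embedding (V T : finType) (F : rel V) (D : rel T) :
  (exists2 phi : V -> T, injective phi & forall u v, F u v -> D (phi u) (phi v)) ->
  contains_subdivision F D.
Proof.
move=> [phi phi_inj phiD]; exists phi, (fun _ _ => [::]).
by split=> //; split=> // u v Fuv; split=> //=; rewrite phiD.
Qed.

Lemma mad_property_forest (V : finType) (F : rel V) :
  oriented_forest F -> mad_property F #|V|.
Proof.
move=> forestF T D irrD chiD; apply: contains_subdivision_of_embedding.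
have [V0|Vpos] := posnP #|V|.
  by exists (fun v => False_rect _ (fintype0 v V0)) => u; case: (fintype0 u V0).
have notcol := @dichromatic_ge_not_dicolorable _ D #|V|.-1.
rewrite prednK // in notcol; have [S critS] := exists_dicritical (notcol chiD).
have outdeg := dicritical_outdegree irrD critS.
have indeg := dicritical_outdegree (D := converse D) irrD (dicritical_converse critS).
have /set0Pn[t0 t0S] : S != set0.
  by apply/eqP => S0; apply: critS.1; rewrite S0; apply: dicolorable_on_set0.
have cardS : #|V| <= #|S|.
  rewrite (cardsD1 t0 S) t0S -(prednK Vpos) ltnS; apply: leq_trans (outdeg t0 t0S) _.
  apply/subset_leq_card/subsetP => y; rewrite !inE => /andP[-> Dt0y].
  by rewrite andbT; apply: contraTneq Dt0y => ->; rewrite irrD.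
have [phi [phi_inj _ phiD]] :=
  exists_embedding forestF irrD cardS outdeg indeg t0 setT.
by exists phi => [u v|u v Fuv]; [apply: phi_inj | apply: phiD]; rewrite ?inE.
Qed.

Lemma dichromatic_ge_complete (T : finType) :
  dichromatic_ge (fun x y : T => x != y) #|T|.
Proof.
move=> k [[f acf] _]; rewrite leqNgt; apply/negP => kT.
have /dinjectivePn[x _ [y]] : ~~ injectiveb f.
  by apply: contraTN kT => /injectiveP /leq_card; rewrite card_ord -leqNgt.
rewrite !inE => /andP[yx _] fxy; apply: (acf (f x)); exists [:: x; y].
by rewrite /= !inE fxy eqxx /cycle /= yx eq_sym yx.
Qed.

Lemma mad_property_card_le (V : finType) (F : rel V) c :
  mad_property F c -> #|V| <= c.
Proof.
move=> madF; have loopless_c : loopless (fun x y : 'I_c => x != y).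
  by move=> x; rewrite /= eqxx.
have := @dichromatic_ge_complete 'I_c; rewrite card_ord => /(madF _ _ loopless_c).
by move=> [phi [_ [phi_inj _]]]; rewrite -(card_ord c); apply: leq_card phi_inj.
Qed.

Theorem corollary35 (V : finType) (F : rel V) :
  oriented_forest F -> is_mad_dichi F #|V|.
Proof.
move=> forestF; split; first exact: mad_property_forest.
by move=> c; apply: mad_property_card_le.
Qed.
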